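(* Let $A=\{a_1,\dots,a_{3k}\}$ be an instance of 3-PARTITION with $a^2$ divisible by $7$, and let $G(A)$ be the bipartite network constructed from $A$ as described in the context. In any division of $G(A)$ with maximal bipartite modularity, every community contains at most one of the bicliques $K_1,\dots,K_k$.
   Context: An instance of 3-PARTITION is a set of $3k$ positive integers $A=\{a_1,\dots,a_{3k}\}$ such that $a=\sum_{i=1}^{3k}a_i=kb$ and $b/4<a_i<b/2$ for all $i$, for some integer $b$. The bipartite network $G(A)$ (vertices colored red/blue, every edge joining a red and a blue vertex) is built as follows. (1) Construct $k$ complete bipartite networks (bicliques) $K_1,\dots,K_k$, each with $a$ red and $a$ blue vertices. (2) For each $i=1,\dots,3k$ add a red vertex $x_i$ and a blue vertex $y_i$ (element vertices). (3) For each $i$, connect $x_i$ to $a_i$ blue vertices in each of the $k$ bicliques, in such a way that each blue vertex of every biclique is adjacent to exactly one red element vertex; similarly connect $y_i$ to $a_i$ red vertices in each biclique so that each red vertex of every biclique is adjacent to exactly one blue element vertex. (4) For each $i$, add the edge $x_iy_i$. (5) For each $i$, construct a star $X_i$ with one blue internal vertex and $a^2/7$ red leaves, and a star $Y_i$ with one red internal vertex and $a^2/7$ blue leaves. (6) For each $i$, connect $x_i$ to the internal vertex of $X_i$ and $y_i$ to the internal vertex of $Y_i$. A division of the vertex set is a partition into communities. With $m$ the number of edges, Barber's bipartite modularity is $Q_b(\mathcal{C})=\sum_{C\in\mathcal{C}}\left(\frac{m_C}{m}-\frac{R_CB_C}{m^2}\right)$, where $m_C$ is the number of edges inside $C$ and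 $R_C$ (resp. $B_C$) is the sum of degrees of red (resp. blue) vertices in $C$. A division with maximal bipartite modularity is one maximizing $Q_b$ over all divisions. A community ''contains'' a biclique $K_t$ if all vertices of $K_t$ lie in it. *)

From HB Require Import structures.
From mathcomp Require Import all_boot all_order all_algebra.
Set Implicit Arguments. Unset Strict Implicit. Unset Printing Implicit Defensive.
Import Order.TTheory GRing.Theory Num.Theory.

(* Barber's bipartite modularity of a division of a finite bipartite  *)
(* network.  [red v] is the colour of v (true = red, false = blue) and *)
(* [E u v] holds iff {u,v} is an edge with u red and v blue.  Each    *)
(* edge is thus counted once by the ordered pair (red end, blue end). *)
Section Modularity.
Variables (T : finType) (red : T -> bool) (E : T -> T -> bool).

Definition nedges : nat := #|[set p : T * T | E p.1 p.2]|.
Definition degree (v : T) : nat := #|[set w : T | E v w || E w v]|.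
Definition edges_in (C : {set T}) : nat :=
  #|[set p : T * T | [&& p.1 \in C, p.2 \in C & E p.1 p.2]]|.
Definition red_deg (C : {set T}) : nat := \sum_(v in C | red v) degree v.
Definition blue_deg (C : {set T}) : nat := \sum_(v in C | ~~ red v) degree v.

Definition bip_modularity (P : {set {set T}}) : rat :=
  \sum_(C in P) (((edges_in C)%:R / (nedges%:R)
                 - (red_deg C * blue_deg C)%:R / (nedges%:R ^+ 2)))%R.

Definition division (P : {set {set T}}) : bool := partition P [set: T].

Definition max_modularity_division (P : {set {set T}}) : Prop :=
  division P /\ forall P', division P' -> (bip_modularity P' <= bip_modularity P)%R.
End Modularity.

(* The network G(A).  Vertices:                                       *)
(*  - biclique vertices (t, j, r), t < k, j < a, r = true red / false *)
(*    blue;                                                           *)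
(*  - element vertices (i, r): r = true is x_i (red), false is y_i    *)
(*    (blue);                                                         *)
(*  - star centres (i, r): r = true is the centre of Y_i (red),       *)
(*    r = false the centre of X_i (blue);                             *)
(*  - star leaves (i, l, r), l < L = a^2/7: r = true is a (red) leaf  *)
(*    of X_i, r = false a (blue) leaf of Y_i.                         *)
Notation GV k a L :=
  ((('I_k * 'I_a * bool) + ('I_(3 * k) * bool)) + ('I_(3 * k) * bool)
   + ('I_(3 * k) * 'I_L * bool))%type.

Definition bic {k a L : nat} (t : 'I_k) (j : 'I_a) (r : bool) : GV k a L :=
  inl (inl (inl (t, j, r))).

Section Network.
Variables (k a L : nat).
(* fB t j = index i of the red element vertex x_i adjacent to the blue
   vertex j of biclique K_t; gR t j = index i of the blue element vertex
   y_i adjacent to the red vertex j of K_t. *)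
Variables (fB gR : 'I_k -> 'I_a -> 'I_(3 * k)).

Definition GA_red (v : GV k a L) : bool :=
  match v with
  | inl (inl (inl (_, _, r))) => r
  | inl (inl (inr (_, r))) => r
  | inl (inr (_, r)) => r
  | inr (_, _, r) => r
  end.

Definition GA_edge (u v : GV k a L) : bool :=
  match u, v with
  (* (1) bicliques *)
  | inl (inl (inl (t, _, true))), inl (inl (inl (t', _, false))) => t == t'
  (* (3) x_i -- blue biclique vertices *)
  | inl (inl (inr (i, true))), inl (inl (inl (t, j, false))) => fB t j == i
  (* (3) red biclique vertices -- y_i *)
  | inl (inl (inl (t, j, true))), inl (inl (inr (i, false))) => gR t j == i
  (* (4) x_i -- y_i *)
  | inl (inl (inr (i, true))), inl (inl (inr (i', false))) => i == i'
  (* (5) star X_i : red leaves -- blue centre *)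
  | inr (i, _, true), inl (inr (i', false)) => i == i'
  (* (5) star Y_i : red centre -- blue leaves *)
  | inl (inr (i, true)), inr (i', _, false) => i == i'
  (* (6) x_i -- centre of X_i *)
  | inl (inl (inr (i, true))), inl (inr (i', false)) => i == i'
  (* (6) centre of Y_i -- y_i *)
  | inl (inr (i, true)), inl (inl (inr (i', false))) => i == i'
  | _, _ => false
  end.

Definition contains_biclique (C : {set GV k a L}) (t : 'I_k) : bool :=
  [forall j : 'I_a, forall r : bool, bic t j r \in C].
End Network.

Definition three_partition_instance (k b : nat) (A : 'I_(3 * k) -> nat) : Prop :=
  (forall i, 0 < A i) /\ \sum_(i < 3 * k) A i = k * b /\
  (forall i, b < 4 * A i /\ 2 * A i < b).

Definition valid_assignment (k a : nat) (A : 'I_(3 * k) -> nat)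
    (f : 'I_k -> 'I_a -> 'I_(3 * k)) : Prop :=
  forall (t : 'I_k) (i : 'I_(3 * k)), #|[set j : 'I_a | f t j == i]| = A i.

From mathcomp Require Import all_boot all_order all_algebra.
From mathcomp Require Import zify ring lra.
Set Implicit Arguments. Unset Strict Implicit. Unset Printing Implicit Defensive.
Import Order.TTheory GRing.Theory Num.Theory.

(* Suppose a community C of an optimal division contains two bicliques K_t1
   and K_t2, and split C into C :&: K_t1 and C :\: K_t1.  Only the at most 2a
   edges leaving K_t1 are lost, a loss of at most 2a/m in coverage, while the
   null-model term gains (R1 B2 + R2 B1)/m^2 >= 2a^4/m^2, every biclique
   vertex having degree >= a.  The network has m < a^3 edges (the stars carry
   about 6ka^2/7 of them, and a = kb with k >= 2, b >= 3), so the split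
   strictly increases the modularity. *)

Section SplitGain.
Local Open Scope ring_scope.

Lemma modularity_split_gain (m eC e1 e2 c R1 R2 B1 B2 : nat) :
  (0 < m)%N -> (eC <= e1 + e2 + c)%N -> (c * m < R1 * B2 + R2 * B1)%N ->
  eC%:R / m%:R - ((R1 + R2) * (B1 + B2))%:R / m%:R ^+ 2 <
   (e1%:R / m%:R - (R1 * B1)%:R / m%:R ^+ 2)
   + (e2%:R / m%:R - (R2 * B2)%:R / m%:R ^+ 2) :> rat.
Proof.
move=> m_gt0 le_eC lt_cut.
have key : (eC * m + R1 * B1 + R2 * B2 < (e1 + e2) * m + (R1 + R2) * (B1 + B2))%N.
  have : (eC * m <= (e1 + e2 + c) * m)%N by rewrite leq_mul2r le_eC orbT.
  nia.
have m_gt0' : (0 : rat) < m%:R by rewrite ltr0n.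
have over_m2 (x y : rat) : x / m%:R - y / m%:R ^+ 2 = (x * m%:R - y) / m%:R ^+ 2.
  by field; rewrite gt_eqF.
rewrite !over_m2 -mulrDl ltr_pM2r ?invr_gt0 ?exprn_gt0 //.
move: key; rewrite -(ltr_nat rat) !natrD !natrM.
lra.
Qed.

End SplitGain.

Section SplitBlock.
Variables (T : finType) (D : {set T}) (P : {set {set T}}) (C K : {set T}).
Variables (x1 x2 : T).
Hypotheses (partP : partition P D) (CP : C \in P).
Hypotheses (x1CK : x1 \in C :&: K) (x2CK : x2 \in C :\: K).

Definition split_block : {set {set T}} := (C :&: K) |: ((C :\: K) |: (P :\ C)).

Lemma notin_setD1_of_sub (B : {set T}) (x : T) :
  B \subset C -> x \in B -> B \notin P :\ C.
Proof.
move=> BC xB; apply/negP => /setD1P [BneC BP].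
have /trivIsetP/(_ B C BP CP BneC)/disjoint_setI0 BC0 := partition_trivIset partP.
have : x \in B :&: C by rewrite inE xB (subsetP BC).
by rewrite BC0 inE.
Qed.

Lemma big_split_block (R : Type) (idx : R) (op : Monoid.com_law idx)
    (F : {set T} -> R) :
  \big[op/idx]_(B in split_block) F B
  = op (F (C :&: K)) (op (F (C :\: K)) (\big[op/idx]_(B in P :\ C) F B)).
Proof.
have CDK_new : C :\: K \notin P :\ C := notin_setD1_of_sub (subsetDl C K) x2CK.
have CIK_new : C :&: K \notin (C :\: K) |: (P :\ C).
  rewrite in_setU1 negb_or (notin_setD1_of_sub (subsetIl C K) x1CK) andbT.
  apply/eqP => CIK_CDK; have := x1CK.
  by rewrite CIK_CDK => /setDP [_]; case/setIP: x1CK => _ ->.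
by rewrite big_setU1 // big_setU1.
Qed.

Lemma partition_split_block : partition split_block D.
Proof.
move: partP => /and3P [/eqP covP tP P0].
have cov' : cover split_block = D.
  by rewrite /cover big_split_block -covP /cover (big_setD1 _ CP) /= setUA setID.
apply/and3P; split; first by rewrite cov'.
- rewrite /trivIset big_split_block cov' -covP.
  move: tP; rewrite /trivIset (big_setD1 _ CP) /=.
  by rewrite -{1}(cardsID K C) addnA.
- rewrite !in_setU1 !negb_or in_setD1 (negbTE P0) andbF andbT.
  by apply/andP; split; apply/eqP => C0; [move: x1CK | move: x2CK]; rewrite -C0 inE.
Qed.

End SplitBlock.

Section Modularity.
Variables (T : finType) (red : T -> bool) (E : T -> T -> bool).
Local Notation m := (nedges E).

Definition cut_edges (K : {set T}) : {set T * T} :=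
  [set p : T * T | E p.1 p.2 && ((p.1 \in K) != (p.2 \in K))].

Definition community_score (C : {set T}) : rat :=
  ((edges_in E C)%:R / m%:R - (red_deg red E C * blue_deg red E C)%:R / m%:R ^+ 2)%R.

Lemma edges_in_split (C K : {set T}) :
  edges_in E C <= edges_in E (C :&: K) + edges_in E (C :\: K) + #|cut_edges K|.
Proof.
have sub : [set p : T * T | [&& p.1 \in C, p.2 \in C & E p.1 p.2]] \subset
    ([set p : T * T | [&& p.1 \in C :&: K, p.2 \in C :&: K & E p.1 p.2]] :|:
     [set p : T * T | [&& p.1 \in C :\: K, p.2 \in C :\: K & E p.1 p.2]]) :|:
    cut_edges K.
  apply/subsetP => p; rewrite !inE => /and3P [-> -> ->] /=.
  by case: (p.1 \in K); case: (p.2 \in K).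
apply: leq_trans (subset_leq_card sub) _.
apply: leq_trans (leq_card_setU _ _).1 _.
by rewrite leq_add2r; exact: (leq_card_setU _ _).1.
Qed.

Lemma red_degID (C K : {set T}) :
  red_deg red E C = red_deg red E (C :&: K) + red_deg red E (C :\: K).
Proof. by rewrite /red_deg (big_setIDcond _ _ K). Qed.

Lemma blue_degID (C K : {set T}) :
  blue_deg red E C = blue_deg red E (C :&: K) + blue_deg red E (C :\: K).
Proof. by rewrite /blue_deg (big_setIDcond _ _ K). Qed.

Lemma community_score_split_lt (C K : {set T}) :
  0 < m ->
  #|cut_edges K| * m < red_deg red E (C :&: K) * blue_deg red E (C :\: K)
                       + red_deg red E (C :\: K) * blue_deg red E (C :&: K) ->
  (community_score C < community_score (C :&: K) + community_score (C :\: K))%R.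
Proof.
move=> m_gt0 cut_lt.
rewrite /community_score (red_degID C K) (blue_degID C K).
exact: modularity_split_gain m_gt0 (edges_in_split C K) cut_lt.
Qed.

Lemma max_modularity_split_unprofitable (P : {set {set T}}) (C K : {set T}) (x1 x2 : T) :
  max_modularity_division red E P -> C \in P ->
  x1 \in C :&: K -> x2 \in C :\: K -> 0 < m ->
  red_deg red E (C :&: K) * blue_deg red E (C :\: K)
  + red_deg red E (C :\: K) * blue_deg red E (C :&: K) <= #|cut_edges K| * m.
Proof.
move=> [divP maxP] CP x1CK x2CK m_gt0; rewrite leqNgt; apply/negP => cut_lt.
have := maxP _ (partition_split_block divP CP x1CK x2CK).
rewrite /bip_modularity (big_split_block divP CP x1CK x2CK) (big_setD1 _ CP) /=.
rewrite addrA lerD2r leNgt.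
by rewrite (community_score_split_lt m_gt0 cut_lt).
Qed.

End Modularity.

Section Network.
Variables (k a L : nat) (fB gR : 'I_k -> 'I_a -> 'I_(3 * k)).
Local Notation T := (GV k a L).
Local Notation E := (GA_edge (L:=L) fB gR).
Local Notation red := (GA_red (k:=k) (a:=a) (L:=L)).

Definition x_vertex (i : 'I_(3 * k)) : T := inl (inl (inr (i, true))).
Definition y_vertex (i : 'I_(3 * k)) : T := inl (inl (inr (i, false))).
Definition centre_X (i : 'I_(3 * k)) : T := inl (inr (i, false)).
Definition centre_Y (i : 'I_(3 * k)) : T := inl (inr (i, true)).

Definition biclique (t : 'I_k) : {set T} :=
  [set v : T | if v is inl (inl (inl (t', _, _))) then t' == t else false].

(* An edge inside a biclique is coded by its two indices; any other edge is
   determined by one of its endpoints, so edges inject into T + k * a * a. *)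
Definition edge_code (p : T * T) : T + ('I_k * 'I_a * 'I_a) :=
  match p with
  | (inl (inl (inl (t, j, true))), inl (inl (inl (_, j', false)))) => inr (t, j, j')
  | (inl (inl (inr (_, true))), inl (inl (inl (_, _, false)))) => inl p.2
  | (inl (inr (_, true)), inr (_, _, false)) => inl p.2
  | (inl (inl (inr (_, true))), inl (inr (_, false))) => inl p.2
  | _ => inl p.1
  end.

Definition edge_decode (z : T + ('I_k * 'I_a * 'I_a)) : T * T :=
  match z with
  | inr (t, j, j') => (bic t j true, bic t j' false)
  | inl v =>
    match v with
    | inl (inl (inl (t, j, false))) => (x_vertex (fB t j), v)
    | inl (inl (inl (t, j, true))) => (v, y_vertex (gR t j))
    | inl (inl (inr (i, true))) => (v, y_vertex i)
    | inl (inl (inr (i, false))) => (v, v)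
    | inl (inr (i, true)) => (v, y_vertex i)
    | inl (inr (i, false)) => (x_vertex i, v)
    | inr (i, _, true) => (v, centre_X i)
    | inr (i, _, false) => (centre_Y i, v)
    end
  end.

Lemma edge_codeK (p : T * T) : E p.1 p.2 -> edge_decode (edge_code p) = p.
Proof.
case: p => [[[[[[t j] []]|[i []]]|[i []]]|[[i l] []]]
            [[[[[t' j'] []]|[i' []]]|[i' []]]|[[i' l'] []]]] //=.
all: by move/eqP => eq_ii'; subst.
Qed.

Lemma nedges_GA_le :
  nedges E <= k * (a * a) + k * a * 2 + 3 * k * 2 + 3 * k * 2 + 3 * k * L * 2.
Proof.
have code_inj : {in [set p : T * T | E p.1 p.2] &, injective edge_code}.
  by apply: (can_in_inj (g := edge_decode)) => p; rewrite inE; exact: edge_codeK.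
rewrite /nedges -(card_in_imset code_inj); apply: leq_trans (max_card _) _.
by rewrite !card_sum !card_prod !card_ord !card_bool; lia.
Qed.

Lemma nedges_GA_lt_cube (b : nat) :
  a = k * b -> 2 <= k -> 3 <= b -> 7 * L <= a * a -> nedges E < a * (a * a).
Proof.
move=> a_kb k_ge2 b_ge3 L_le.
have := nedges_GA_le.
have kL_le : k * (7 * L) <= k * (a * a) by rewrite leq_mul2l L_le orbT.
have ka3_le : 3 * k * (a * a) <= a * (a * a) by rewrite a_kb; nia.
have a_ge6 : 6 <= a by rewrite a_kb; nia.
have lin_lt : 14 * a + 84 < 8 * (a * a) by nia.
have : k * (14 * a + 84) < k * (8 * (a * a)) by rewrite ltn_pmul2l //; lia.
nia.
Qed.

Lemma bic_inj (t : 'I_k) (r : bool) : injective (fun j => bic t j r : T).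
Proof. by move=> j j' []. Qed.

Lemma card_biclique_le (t : 'I_k) : #|biclique t| <= a * 2.
Proof.
have -> : biclique t = [set bic t jr.1 jr.2 | jr : 'I_a * bool].
  apply/setP => v; apply/idP/imsetP => [|[[j r] _ ->]]; last by rewrite inE /= eqxx.
  by rewrite inE; case: v => [[[[[t' j] r]|]|]|] // /eqP ->; exists (j, r).
by apply: leq_trans (leq_imset_card _ _) _; rewrite card_prod card_ord card_bool.
Qed.

(* A cut edge of a biclique joins one of its vertices to the element vertex
   attached to it, so it is determined by its end inside the biclique. *)
Definition cut_edge_at (v : T) : T * T :=
  match v with
  | inl (inl (inl (t, j, true))) => (v, y_vertex (gR t j))
  | inl (inl (inl (t, j, false))) => (x_vertex (fB t j), v)
  | _ => (v, v)
  end.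

Lemma cut_biclique_le (t : 'I_k) : #|cut_edges E (biclique t)| <= a * 2.
Proof.
pose inner (p : T * T) := if p.1 \in biclique t then p.1 else p.2.
have inner_inj : {in cut_edges E (biclique t) &, injective inner}.
{ apply: (can_in_inj (g := cut_edge_at)) => p; rewrite !inE /inner.
  case: p => [[[[[[t1 j] []]|[i []]]|[i []]]|[[i l] []]]
              [[[[[t2 j'] []]|[i' []]]|[i' []]]|[[i' l'] []]]] //=.
  all: rewrite ?inE /= ?andbF //.
  all: by case/andP => /eqP <-; case: (_ == t). }
have inner_in : inner @: cut_edges E (biclique t) \subset biclique t.
  apply/subsetP => _ /imsetP [p cut_p ->]; move: cut_p; rewrite inE /inner.
  by case: ifP => // _ /andP [_]; case: (p.2 \in _).
rewrite -(card_in_imset inner_inj); apply: leq_trans (subset_leq_card inner_in) _.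
exact: card_biclique_le.
Qed.

Lemma biclique_degree_ge (t : 'I_k) (j : 'I_a) (r : bool) :
  a <= degree E (bic t j r).
Proof.
have other_side : [set bic t j' (~~ r) | j' : 'I_a] \subset
    [set w : T | E (bic t j r) w || E w (bic t j r)].
  apply/subsetP => _ /imsetP [j' _ ->].
  by rewrite inE; case: r; rewrite /= eqxx ?orbT.
apply: leq_trans (subset_leq_card other_side).
by rewrite card_imset ?card_ord //; exact: bic_inj.
Qed.

Lemma biclique_side_degree_sum_ge (S : {set T}) (pr : pred T) (t : 'I_k) (r : bool) :
  (forall j, bic t j r \in S) -> (forall j, pr (bic t j r)) ->
  a * a <= \sum_(v in S | pr v) degree E v.
Proof.
move=> side_S side_pr.
apply: (@leq_trans (\sum_(v in [set bic t j r | j : 'I_a]) a)).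
  by rewrite sum_nat_const card_imset ?card_ord //; exact: bic_inj.
rewrite [leqRHS]big_mkcond [leqLHS]big_mkcond /=.
apply: leq_sum => v _; case: ifP => // /imsetP [j _ ->].
by rewrite side_S side_pr; exact: biclique_degree_ge.
Qed.

Lemma contains_biclique_mem (C : {set T}) (t : 'I_k) (j : 'I_a) (r : bool) :
  contains_biclique C t -> bic t j r \in C.
Proof. by move=> /forallP/(_ j)/forallP/(_ r). Qed.

Lemma max_modularity_community_biclique_unique (b : nat) (P : {set {set T}})
    (C : {set T}) (t1 t2 : 'I_k) :
  a = k * b -> 3 <= b -> 7 * L <= a * a ->
  max_modularity_division red E P -> C \in P ->
  contains_biclique C t1 -> contains_biclique C t2 -> t1 = t2.
Proof.
move=> a_kb b_ge3 L_le maxP CP C_t1 C_t2; apply/eqP/contraT => t1_ne_t2.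
have k_ge2 : 2 <= k.
  by have := ltn_ord t1; have := ltn_ord t2; move: t1_ne_t2; rewrite -val_eqE /=; lia.
have a_gt0 : 0 < a by rewrite a_kb; nia.
pose j0 := Ordinal a_gt0.
have in1 j r : bic t1 j r \in C :&: biclique t1.
  by rewrite !inE contains_biclique_mem //= eqxx.
have in2 j r : bic t2 j r \in C :\: biclique t1.
  by rewrite !inE contains_biclique_mem // andbT /= eq_sym.
have m_gt0 : 0 < nedges E.
  rewrite /nedges card_gt0; apply/set0Pn; exists (bic t1 j0 true, bic t1 j0 false).
  by rewrite inE /= eqxx.
have no_gain :=
  max_modularity_split_unprofitable maxP CP (in1 j0 true) (in2 j0 true) m_gt0.
have R1 : a * a <= red_deg red E (C :&: biclique t1) :=
  biclique_side_degree_sum_ge (in1^~ true) (fun=> isT).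
have B1 : a * a <= blue_deg red E (C :&: biclique t1) :=
  biclique_side_degree_sum_ge (in1^~ false) (fun=> isT).
have R2 : a * a <= red_deg red E (C :\: biclique t1) :=
  biclique_side_degree_sum_ge (in2^~ true) (fun=> isT).
have B2 : a * a <= blue_deg red E (C :\: biclique t1) :=
  biclique_side_degree_sum_ge (in2^~ false) (fun=> isT).
have cut_m_lt : #|cut_edges E (biclique t1)| * nedges E < a * 2 * (a * (a * a)).
  apply: leq_ltn_trans (leq_mul (cut_biclique_le t1) (leqnn _)) _.
  by rewrite ltn_pmul2l ?muln_gt0 ?a_gt0 // (nedges_GA_lt_cube a_kb k_ge2 b_ge3 L_le).
have a4 : a * 2 * (a * (a * a)) = a * a * (a * a) + a * a * (a * a).
  by rewrite addnn -mul2n [a * 2]mulnC -!mulnA.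
have := leq_ltn_trans no_gain cut_m_lt.
by rewrite a4 ltnNge leq_add ?leq_mul.
Qed.

End Network.

Theorem lemma2 (k b : nat) (A : 'I_(3 * k) -> nat)
    (fB gR : 'I_k -> 'I_(k * b) -> 'I_(3 * k)) :
  three_partition_instance b A ->
  (7 %| (k * b) ^ 2)%N ->
  valid_assignment A fB -> valid_assignment A gR ->
  forall P : {set {set GV k (k * b) ((k * b) ^ 2 %/ 7)}},
    max_modularity_division (GA_red (L:=(k * b) ^ 2 %/ 7))
      (GA_edge (L:=(k * b) ^ 2 %/ 7) fB gR) P ->
    forall C, C \in P ->
    forall t1 t2 : 'I_k,
      contains_biclique C t1 -> contains_biclique C t2 -> t1 = t2.
Proof.
move=> [A_gt0 [_ A_bounds]] _ _ _ P maxP C CP t1 t2.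
have i0 : 0 < 3 * k by rewrite muln_gt0 (leq_ltn_trans (leq0n t1) (ltn_ord t1)).
have b_ge3 : 3 <= b.
  by have := A_gt0 (Ordinal i0); have [_] := A_bounds (Ordinal i0); lia.
have L_le : 7 * ((k * b) ^ 2 %/ 7) <= k * b * (k * b).
  by rewrite mulnn mulnC leq_divM.
exact: max_modularity_community_biclique_unique erefl b_ge3 L_le maxP CP.
Qed.
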